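(* Let $\xi$ be an American option and let $\mathcal{Z}^{\mathrm{ad}}_0\subseteq\mathbb{R}^d$ be given by the construction in the context. Then \[ \mathcal{Z}^{\mathrm{ad}}_0=\{x\in\mathbb{R}^d:\exists Y\in\Phi^{\mathrm{ag}}(\xi),\ x=Y_0\}, \] and for each $j=1,\ldots,d$ the ask price satisfies $\pi^{\mathrm{ag}}_j(\xi)=\min\{x\in\mathbb{R}: xe^j\in\mathcal{Z}^{\mathrm{ad}}_0\}$ (the minimum being attained). Moreover, there exists $Y\in\Phi^{\mathrm{ag}}(\xi)$ with $Y_0=\pi^{\mathrm{ag}}_j(\xi)e^j$.
   Context: Finite filtered probability space $(\Omega,\mathcal{F},\mathbb{P};(\mathcal{F}_t)_{t=0}^T)$, $\mathcal{F}_0$ trivial, $\mathcal{F}_T=2^\Omega$, $\mathbb{P}(\{\omega\})>0$. $\Omega_t$: atoms (nodes) of $\mathcal{F}_t$; for $\mu\in\Omega_t$, $t<T$, $\mathrm{succ}\,\mu=\{\nu\in\Omega_{t+1}:\nu\subseteq\mu\}$. $\mathcal{L}_t$: $\mathcal{F}_t$-measurable $\mathbb{R}^d$-valued random variables (functions on $\Omega_t$). $d$ assets with $\mathcal{F}_t$-measurable exchange rates $\pi^{jk}_t>0$, $\pi^{jj}_t=1$. For $\mu\in\Omega_t$, $\mathcal{K}^\mu_t$ is the convex cone generated by $e^1,\ldots,e^d$ and $\pi^{jk}_t(\mu)e^j-e^k$, and $\mathcal{K}_t=\{x\in\mathcal{L}_t:x(\mu)\in\mathcal{K}^\mu_t\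 \forall\mu\}$. Deferred solvency cone $\mathcal{Q}_t$: set of $z\in\mathcal{L}_t$ for which there are $y_{t+1},\ldots,y_{T+1}$, $y_s\in\mathcal{L}_{s-1}$, $y_{T+1}=0$, with $z-y_{t+1}\in\mathcal{K}_t$, $y_s-y_{s+1}\in\mathcal{K}_s$ ($s=t+1,\ldots,T$); $\mathcal{Q}^\mu_t=\{z(\mu):z\in\mathcal{Q}_t\}$. Trading strategies $\Phi$: $y=(y_t)_{t=0}^{T+1}$, $y_0\in\mathbb{R}^d$, $y_t\in\mathcal{L}_{t-1}$, $y_{T+1}=0$. Mixed stopping times $\mathcal{X}$: adapted $[0,1]$-valued $\chi$ with $\sum_t\chi_t=1$. American option: adapted $\mathbb{R}^d$-valued $\xi=(\xi_t)_{t=0}^T$. $\Phi^{\mathrm{ag}}(\xi)$: maps $Y:\mathcal{X}\to\Phi$ with $Y^\chi_t-\chi_t\xi_t-Y^\chi_{t+1}\in\mathcal{K}_t$ for all $\chi$, $t=0,\ldots,T$, and non-anticipating: $\chi_s(\omega)=\chi'_s(\omega)$ for $s<t$ implies $Y^\chi_t(\omega)=Y^{\chi'}_t(\omega)$; $Y_0$ is the common value of $Y^\chi_0$. Ask price: $\pi^{\mathrm{ag}}_j(\xi)=\inf\{x\in\mathbb{R}:\exists Y\in\Phi^{\mathrm{ag}}(\xi),\ xe^j=Y_0\}$. Construction (node by node): for $t=0,\ldots,T$ and $\mu\in\Omega_t$, $\mathcal{U}^{\mathrm{ad}\mu}_t=\xi_t(\mu)+\mathcal{Q}^\mu_t$;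 for $\mu\in\Omega_T$, $\mathcal{Z}^{\mathrm{ad}\mu}_T=\mathcal{V}^{\mathrm{ad}\mu}_T=\mathcal{W}^{\mathrm{ad}\mu}_T=\mathcal{U}^{\mathrm{ad}\mu}_T$; backwards for $t=T-1,\ldots,0$ and $\mu\in\Omega_t$: $\mathcal{W}^{\mathrm{ad}\mu}_t=\bigcap_{\nu\in\mathrm{succ}\,\mu}\mathcal{Z}^{\mathrm{ad}\nu}_{t+1}$, $\mathcal{V}^{\mathrm{ad}\mu}_t=\mathcal{W}^{\mathrm{ad}\mu}_t+\mathcal{Q}^\mu_t$, $\mathcal{Z}^{\mathrm{ad}\mu}_t=\mathcal{U}^{\mathrm{ad}\mu}_t\cap\mathcal{V}^{\mathrm{ad}\mu}_t$. $\mathcal{Z}^{\mathrm{ad}}_0$ denotes the set at the single node of $\Omega_0$. Standing assumption: no arbitrage (no $y\in\Phi$ with $y_0=0$, $y_t-y_{t+1}\in\mathcal{K}_t$ for $t<T$ and $y_T-x\in\mathcal{K}_T$ for some nonzero componentwise non-negative $x\in\mathcal{L}_T$). *)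

From HB Require Import structures.
From mathcomp Require Import all_boot all_order all_algebra.
From mathcomp Require Import boolp classical_sets reals.
Set Implicit Arguments. Unset Strict Implicit. Unset Printing Implicit Defensive.
Import Order.TTheory GRing.Theory Num.Theory.
Local Open Scope ring_scope.

Section Model.
Variables (R : realType) (d : nat) (Omega : finType) (T : nat).
(* F t : the partition of Omega into the atoms (nodes) of F_t *)
Variable F : nat -> {set {set Omega}}.
(* pi t w j k = pi^{jk}_t(w) *)
Variable pi : nat -> Omega -> 'I_d -> 'I_d -> R.

Notation vec := 'rV[R]_d.

Definition e (j : 'I_d) : vec := delta_mx 0 j.

Definition filtration : Prop :=
  (forall t, (t <= T)%N -> finset.partition (F t) [set: Omega]) /\
  F 0%N = [set [set: Omega]] /\
  F T = [set [set w] | w : Omega] /\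
  (forall t, (t < T)%N -> forall B, B \in F t.+1 -> exists2 A, A \in F t & B \subset A).

(* F_t-measurability: constant on the atoms of F_t *)
Definition meas (V : Type) (t : nat) (x : Omega -> V) : Prop :=
  forall A, A \in F t -> forall w w', w \in A -> w' \in A -> x w = x w'.

Local Open Scope classical_set_scope.

Definition sameatom (t : nat) (w w' : Omega) : Prop :=
  exists2 A, A \in F t & (w \in A) && (w' \in A).

Definition exchange_rates : Prop :=
  forall t, (t <= T)%N ->
    meas t (pi t) /\ (forall w j k, 0 < pi t w j k) /\ (forall w j, pi t w j j = 1).

Definition Kcone (t : nat) (w : Omega) (x : vec) : Prop :=
  exists (a : 'I_d -> R) (b : 'I_d -> 'I_d -> R),
    (forall k, 0 <= a k) /\ (forall j k, 0 <= b j k) /\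
    x = \sum_(k < d) a k *: e k
        + \sum_(j < d) \sum_(k < d) b j k *: (pi t w j k *: e j - e k).

Definition inK (t : nat) (x : Omega -> vec) : Prop :=
  meas t x /\ forall w, Kcone t w (x w).

(* trading strategies Phi: y_0 in L_0 = R^d, y_t in L_{t-1}, y_t = 0 for t > T *)
Definition strategy (y : nat -> Omega -> vec) : Prop :=
  (forall t, (t <= T.+1)%N -> meas t.-1 (y t)) /\
  (forall t w, (T < t)%N -> y t w = 0).

Definition inQ (t : nat) (z : Omega -> vec) : Prop :=
  meas t z /\
  exists y : nat -> Omega -> vec,
    (forall s, (t < s <= T.+1)%N -> meas s.-1 (y s)) /\
    (forall w, y T.+1 w = 0) /\
    inK t (fun w => z w - y t.+1 w) /\
    (forall s, (t < s <= T)%N -> inK s (fun w => y s w - y s.+1 w)).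

(* Q^mu_t, mu the F_t-atom containing w *)
Definition Qnode (t : nat) (w : Omega) : set vec :=
  [set v | exists z, inQ t z /\ z w = v].

Definition no_arbitrage : Prop :=
  ~ exists y : nat -> Omega -> vec,
      strategy y /\ (forall w, y 0%N w = 0) /\
      (forall t, (t < T)%N -> inK t (fun w => y t w - y t.+1 w)) /\
      exists x : Omega -> vec,
        meas T x /\ (forall w k, 0 <= x w 0 k) /\ (exists w, x w != 0) /\
        inK T (fun w => y T w - x w).

Definition mixed (chi : nat -> Omega -> R) : Prop :=
  (forall t, (t <= T)%N -> meas t (chi t)) /\
  (forall t w, 0 <= chi t w <= 1) /\
  (forall w, \sum_(t < T.+1) chi t w = 1) /\
  (forall t w, (T < t)%N -> chi t w = 0).

Variable xi : nat -> Omega -> vec.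

Definition adapted_option : Prop := forall t, (t <= T)%N -> meas t (xi t).

Definition PhiAg (Y : (nat -> Omega -> R) -> nat -> Omega -> vec) : Prop :=
  (forall chi, mixed chi ->
     strategy (Y chi) /\
     forall t, (t <= T)%N ->
       inK t (fun w => Y chi t w - chi t w *: xi t w - Y chi t.+1 w)) /\
  (forall chi chi', mixed chi -> mixed chi' ->
     forall t w, (forall s, (s < t)%N -> chi s w = chi' s w) ->
       Y chi t w = Y chi' t w).

(* Y_0 = x (Y_0 is the common value of all Y^chi_0) *)
Definition Yzero (Y : (nat -> Omega -> R) -> nat -> Omega -> vec) (x : vec) : Prop :=
  forall chi, mixed chi -> forall w, Y chi 0%N w = x.

Definition askprice (j : 'I_d) : R :=
  inf [set x : R | exists Y, PhiAg Y /\ Yzero Y (x *: e j)].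

Definition Uad (t : nat) (w : Omega) : set vec :=
  [set u | exists2 v, Qnode t w v & u = xi t w + v].

Fixpoint Zrec (n : nat) : Omega -> set vec :=
  match n with
  | 0%N => Uad T
  | n'.+1 => fun w =>
      let t := (T - n'.+1)%N in
      let W := [set v | forall w', sameatom t w w' -> Zrec n' w' v] in
      Uad t w `&` [set a + b | a in W & b in Qnode t w]
  end.

(* Z^{ad mu}_t for the atom mu of F_t containing w *)
Definition Zad (t : nat) (w : Omega) : set vec := Zrec (T - t) w.

(* Z^ad_0 (F_0 trivial, so Zad 0 w does not depend on w) *)
Definition Zad0 : set vec := [set v | forall w, Zad 0%N w v].

End Model.

Arguments e {R d} j.

From HB Require Import structures.
From mathcomp Require Import all_boot all_order all_algebra.
From mathcomp Require Import boolp classical_sets reals.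
From mathcomp Require Import ring lra zify.
Import Order.TTheory GRing.Theory Num.Theory.

Set Implicit Arguments. Unset Strict Implicit. Unset Printing Implicit Defensive.
Local Open Scope classical_set_scope.
Local Open Scope ring_scope.

(* Both inclusions are proved node by node along the backward construction.  If Y
   superhedges, then at a node at time t where exercise has not yet happened, Y_t lies in
   U^ad_t (stop at t: Y_t - xi_t is then liquidated along Y) and in V^ad_t (stop after t:
   Y_t - Y_{t+1} is solvent and Y_{t+1} lies in every successor's Z^ad_{t+1}); being
   non-anticipating, Y takes the same value at t for both stopping times.  Conversely,
   pick F_{t-1}-measurable z_t in Z^ad_t with z_0 = x, z_t - xi_t in Q_t and
   z_t - z_{t+1} in Q_t; against a mixed stopping time chi, the fraction chi_t of z_t
   pays the option and the still unexercised fraction is rolled over to z_{t+1}.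
   The ask price is attained because Z^ad_0 is polyhedral: the solvency cones are finitely
   generated, and the construction only takes sums, intersections and coordinate
   projections, which preserve polyhedra by Fourier-Motzkin elimination.  Its trace on
   the line R e^j is nonempty (a large holding of asset j covers every payoff) and
   bounded below (by no arbitrage), hence has a least element. *)

Section OneVariableInequalities.
Variables (R : realType) (I : finType) (a c : I -> R).

Definition feasible1 (y : R) := forall i, 0 <= a i + c i * y.

Lemma ge0_affine1_pos (u v y : R) : 0 < v -> (0 <= u + v * y) = (- u / v <= y).
Proof. by move=> v0; rewrite ler_pdivrMr //; apply/idP/idP; nra. Qed.

Lemma ge0_affine1_neg (u v y : R) : v < 0 -> (0 <= u + v * y) = (y <= - u / v).
Proof. by move=> v0; rewrite ler_ndivlMr //; apply/idP/idP; nra. Qed.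

Lemma ge0_affine1_npos (u v y y' : R) : v <= 0 -> y <= y' ->
  0 <= u + v * y' -> 0 <= u + v * y.
Proof. by move=> v0 yy' /le_trans; apply; rewrite lerD2l ler_wnM2l. Qed.

(* The second hypothesis says that every lower bound [- a p / c p] on y lies below every
   upper bound [- a q / c q]. *)
Lemma feasible1_exists :
  (forall i, c i = 0 -> 0 <= a i) ->
  (forall p q, 0 < c p -> c q < 0 -> 0 <= c p * a q - c q * a p) ->
  exists y, feasible1 y.
Proof.
move=> zero pair; pose r i := - a i / c i.
have pair_le p q : 0 < c p -> c q < 0 -> r p <= r q.
  move=> cp cq; rewrite -ge0_affine1_neg // -(pmulr_rge0 _ cp).
  by have := pair p q cp cq; rewrite /r; congr (0 <= _); field; rewrite gt_eqF.
have solves_at y :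
    (forall i, 0 < c i -> r i <= y) -> (forall i, c i < 0 -> y <= r i) -> feasible1 y.
  move=> lo up i; case: (ltgtP (c i) 0) => ci.
  - by rewrite ge0_affine1_neg // up.
  - by rewrite ge0_affine1_pos // lo.
  - by rewrite ci mul0r addr0 zero.
case: (pickP (fun p => 0 < c p)) => [p0 cp0|nopos].
  case: (@arg_maxP _ _ _ p0 (fun p => 0 < c p) r cp0) => p cp pmax; exists (r p).
  by apply: solves_at => // q; apply: pair_le.
case: (pickP (fun q => c q < 0)) => [q0 cq0|noneg].
  case: (@arg_minP _ _ _ q0 (fun q => c q < 0) r cq0) => q cq qmin; exists (r q).
  by apply: solves_at => // p; rewrite nopos.
by exists 0; apply: solves_at => i; rewrite ?nopos ?noneg.
Qed.

Lemma feasible1_min (y0 lb : R) : feasible1 y0 -> (forall y, feasible1 y -> lb <= y) ->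
  exists2 y, feasible1 y & forall y', feasible1 y' -> y <= y'.
Proof.
move=> sol0 lbP; pose r i := - a i / c i.
case: (pickP (fun p => 0 < c p)) => [p0 cp0|nopos]; last first.
  have npos i : c i <= 0 by rewrite leNgt nopos.
  have : feasible1 (Num.min y0 (lb - 1)).
    by move=> i; apply: ge0_affine1_npos (npos i) _ (sol0 i); rewrite ge_min lexx.
  by move/lbP; rewrite le_min => /andP[_]; lra.
case: (@arg_maxP _ _ _ p0 (fun p => 0 < c p) r cp0) => p cp pmax.
have least y : feasible1 y -> r p <= y by move/(_ p); rewrite ge0_affine1_pos.
exists (r p) => // i; case: (ltrP 0 (c i)) => ci.
  by rewrite ge0_affine1_pos //; apply: pmax.
exact: ge0_affine1_npos ci (least _ sol0) (sol0 i).
Qed.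

End OneVariableInequalities.

Section Polyhedra.
Variable R : realType.

Definition affine (J : finType) (f : (J -> R) -> R) :=
  exists (c : J -> R) (b : R), forall z, f z = \sum_j c j * z j + b.

Definition polyhedral (J : finType) (P : (J -> R) -> Prop) :=
  exists (I : finType) (g : I -> (J -> R) -> R),
    (forall i, affine (g i)) /\ forall z, P z <-> forall i, 0 <= g i z.

Section AffineFunctions.
Variable J : finType.
Implicit Types f g : (J -> R) -> R.

Lemma eq_affine f g : f =1 g -> affine f -> affine g.
Proof. by move=> fg [c [b fE]]; exists c, b => z; rewrite -fg. Qed.

Lemma affine_cst a : affine (fun _ : J -> R => a).
Proof. by exists (fun=> 0), a => z; rewrite big1 ?add0r // => j _; rewrite mul0r. Qed.

Lemma affine_coord (j : J) : affine (fun z => z j).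
Proof.
exists (fun i => (i == j)%:R), 0 => z; rewrite addr0 (bigD1 j) //= eqxx mul1r.
by rewrite big1 ?addr0 // => i /negbTE ->; rewrite mul0r.
Qed.

Lemma affineD f g : affine f -> affine g -> affine (fun z => f z + g z).
Proof.
move=> [c [b fE]] [c' [b' gE]]; exists (fun j => c j + c' j), (b + b') => z.
rewrite fE gE addrACA -big_split; congr (_ + _).
by apply: eq_bigr => j _; rewrite mulrDl.
Qed.

Lemma affineZ a f : affine f -> affine (fun z => a * f z).
Proof.
move=> [c [b fE]]; exists (fun j => a * c j), (a * b) => z.
rewrite fE mulrDr mulr_sumr; congr (_ + _).
by apply: eq_bigr => j _; rewrite mulrA.
Qed.

Lemma affineN f : affine f -> affine (fun z => - f z).
Proof. by move=> /(affineZ (-1)); apply: eq_affine => z; rewrite mulN1r. Qed.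

Lemma affineB f g : affine f -> affine g -> affine (fun z => f z - g z).
Proof. by move=> af ag; apply: affineD af (affineN ag). Qed.

Lemma affine_sum (I : finType) (f : I -> (J -> R) -> R) :
  (forall i, affine (f i)) -> affine (fun z => \sum_i f i z).
Proof.
move=> af; suff: forall s : seq I, affine (fun z => \sum_(i <- s) f i z).
  by move/(_ (enum I)); apply: eq_affine => z; rewrite big_enum.
elim=> [|i s IH]; first by apply: eq_affine (affine_cst 0) => z; rewrite big_nil.
by apply: eq_affine (affineD (af i) IH) => z; rewrite big_cons.
Qed.

End AffineFunctions.

Lemma affine_comp (J J' : finType) (f : (J -> R) -> R) (h : (J' -> R) -> J -> R) :
  affine f -> (forall j, affine (fun z => h z j)) -> affine (fun z => f (h z)).
Proof.
move=> [c [b fE]] ah; apply: (eq_affine (f := fun z => \sum_j c j * h z j + b)).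
  by move=> z; rewrite fE.
apply: affineD; last exact: affine_cst.
by apply: affine_sum => j; apply: affineZ.
Qed.

Lemma affine_unitE (g : (unit -> R) -> R) : affine g ->
  forall z, g z = g (fun=> 0) + (g (fun=> 1) - g (fun=> 0)) * z tt.
Proof.
move=> [c [b gE]] z; rewrite !gE.
have sum1 (v : unit -> R) : \sum_j c j * v j = c tt * v tt.
  by rewrite (bigD1 tt) //= big1 ?addr0 // => -[].
by rewrite !sum1; ring.
Qed.

Definition oext (J : finType) (z : J -> R) (y : R) : option J -> R :=
  fun s => if s is Some j then z j else y.

Lemma affine_oext0 (J : finType) (g : (option J -> R) -> R) :
  affine g -> affine (fun z : J -> R => g (oext z 0)).
Proof.
by move=> ag; apply: affine_comp ag _ => -[j|]; [apply: affine_coord | apply: affine_cst].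
Qed.

Lemma affine_oext_slope (J : finType) (g : (option J -> R) -> R) :
  affine g -> exists c, forall z y, g (oext z y) = g (oext z 0) + c * y.
Proof.
move=> [c [b gE]]; exists (c None) => z y.
rewrite !gE (bigD1 None) //= [in RHS](bigD1 None) //= mulr0 add0r.
rewrite (eq_bigr (fun s => c s * oext z 0 s)); last by case.
by rewrite -addrA addrC.
Qed.

Section PolyhedralSets.
Variable J : finType.
Implicit Types P Q : (J -> R) -> Prop.

Lemma eq_polyhedral P Q : (forall z, P z <-> Q z) -> polyhedral P -> polyhedral Q.
Proof. by move=> PQ [I [g [ag gP]]]; exists I, g; split=> // z; rewrite -PQ. Qed.

Lemma polyhedral_ge0 (I : finType) (g : I -> (J -> R) -> R) :
  (forall i, affine (g i)) -> polyhedral (fun z => forall i, 0 <= g i z).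
Proof. by move=> ag; exists I, g. Qed.

Lemma polyhedral_eq0 (I : finType) (g : I -> (J -> R) -> R) :
  (forall i, affine (g i)) -> polyhedral (fun z => forall i, g i z = 0).
Proof.
move=> ag; pose h (p : I * bool) z := if p.2 then g p.1 z else - g p.1 z.
have ah p : affine (h p) by case: p => i [] /=; [apply: ag | apply/affineN/ag].
apply: eq_polyhedral (polyhedral_ge0 ah) => z.
split=> [hz i|gz0 [i b]]; last by rewrite /h gz0 oppr0; case: b.
apply/eqP; rewrite eq_le -oppr_ge0.
by apply/andP; split; [apply: (hz (i, false)) | apply: (hz (i, true))].
Qed.

Lemma polyhedralT : polyhedral (fun _ : J -> R => True).
Proof.
apply: eq_polyhedral (polyhedral_ge0 (g := fun (v : void) _ => 0) _) => [z|[]].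
by split=> // _ [].
Qed.

Lemma polyhedralI P Q : polyhedral P -> polyhedral Q -> polyhedral (fun z => P z /\ Q z).
Proof.
move=> [I [g [ag gP]]] [I' [g' [ag' gQ]]].
exists (I + I')%type, (fun s => match s with inl i => g i | inr i => g' i end).
split=> [[i|i] //|z]; rewrite gP gQ.
by split=> [[Pz Qz] [i|i] //|H]; split=> i; [apply: (H (inl i)) | apply: (H (inr i))].
Qed.

Lemma polyhedral_bigI (I : finType) (P : I -> (J -> R) -> Prop) :
  (forall i, polyhedral (P i)) -> polyhedral (fun z => forall i, P i z).
Proof.
move=> hP; suff: forall s : seq I, polyhedral (fun z => forall i, i \in s -> P i z).
  move/(_ (enum I)); apply: eq_polyhedral => z.
  by split=> H i; [apply: H; rewrite mem_enum | move=> _; apply: H].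
elim=> [|i s IH].
  by apply: eq_polyhedral polyhedralT => z; split=> // _ i; rewrite in_nil.
apply: eq_polyhedral (polyhedralI (hP i) IH) => z; split.
  by move=> [Pi Ps] i'; rewrite in_cons => /predU1P [->|]; last apply: Ps.
by move=> H; split=> [|i' si']; apply: H; rewrite in_cons ?eqxx ?si' ?orbT.
Qed.

End PolyhedralSets.

Lemma polyhedral_comp (J J' : finType) (P : (J -> R) -> Prop) (h : (J' -> R) -> J -> R) :
  polyhedral P -> (forall j, affine (fun z => h z j)) -> polyhedral (fun z => P (h z)).
Proof.
move=> [I [g [ag gP]]] ah; exists I, (fun i z => g i (h z)); split=> [i|z].
  exact: affine_comp.
by rewrite gP.
Qed.

Lemma polyhedral_exists1 (J : finType) (P : (option J -> R) -> Prop) :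
  polyhedral P -> polyhedral (fun z : J -> R => exists y, P (oext z y)).
Proof.
move=> [I [g [ag gP]]].
have [c gE] := choice (fun i => affine_oext_slope (ag i)).
pose a i z := g i (oext z 0).
have aa i : affine (a i) by apply: affine_oext0.
pose h s z := match s with
  | inl i => if c i == 0 then a i z else 0
  | inr (p, q) => if (0 < c p) && (c q < 0) then c p * a q z - c q * a p z else 0
  end.
have ah s : affine (h s).
  case: s => [i|[p q]]; rewrite /h /=.
    by case: (c i == 0); [exact: aa | exact: affine_cst].
  by case: (_ && _); [apply: affineB; apply: affineZ | exact: affine_cst].
apply: eq_polyhedral (polyhedral_ge0 ah) => z.
have PE y : P (oext z y) <-> feasible1 (a ^~ z) c y.
  by rewrite gP; split=> Py i; have := Py i; rewrite gE.
split=> [H|[y /PE Py] [i|[p q]] /=].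
- have [y Py] : exists y, feasible1 (a ^~ z) c y.
    apply: feasible1_exists => [i ci|p q cp cq]; first by have := H (inl i); rewrite /= ci eqxx.
    by have := H (inr (p, q)); rewrite /= cp cq.
  by exists y; apply/PE.
- by case: eqP => // ci; have := Py i; rewrite ci mul0r addr0.
- case: ifP => // /andP[cp cq].
  have -> : c p * a q z - c q * a p z =
      c p * (a q z + c q * y) + (- c q) * (a p z + c p * y) by ring.
  by apply: addr_ge0; apply: mulr_ge0; rewrite ?Py ?oppr_ge0 ?ltW.
Qed.

Definition join_coord (J K : finType) (x : J -> R) (u : K -> R) : J + K -> R :=
  fun s => match s with inl j => x j | inr k => u k end.

Lemma polyhedral_exists_ord (J : finType) n (P : (J + 'I_n -> R) -> Prop) :
  polyhedral P -> polyhedral (fun x => exists u, P (join_coord x u)).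
Proof.
elim: n P => [|n IH] P hP.
  have hP0 : polyhedral (fun x => P (join_coord x (fun=> 0))).
    by apply: polyhedral_comp hP _ => -[j|[]] //; apply: affine_coord.
  apply: eq_polyhedral hP0 => x; split=> [Px|[u]]; first by exists (fun=> 0).
  by have -> : u = (fun=> 0) by apply: funext => -[].
pose r (v : option (J + 'I_n) -> R) s := match s with
  | inl j => v (Some (inl j))
  | inr i => if unlift ord_max i is Some i' then v (Some (inr i')) else v None
  end.
have hPr : polyhedral (fun v => P (r v)).
  apply: polyhedral_comp hP _ => -[j|i] /=; last case: unlift => [i'|]; exact: affine_coord.
apply: eq_polyhedral (IH _ (polyhedral_exists1 hPr)) => x; split.
  case=> u [y Pu]; exists (fun i => if unlift ord_max i is Some i' then u i' else y).
  by congr P: Pu; apply: funext => -[j|i] //=; case: unlift.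
case=> u Pu; exists (fun i => u (lift ord_max i)), (u ord_max).
by congr P: Pu; apply: funext => -[j|i] //=; case: unliftP => [i' ->|->].
Qed.

Lemma polyhedral_exists (J K : finType) (P : (J + K -> R) -> Prop) :
  polyhedral P -> polyhedral (fun x => exists u, P (join_coord x u)).
Proof.
move=> hP.
pose P' (w : J + 'I_#|K| -> R) :=
  P (join_coord (fun j => w (inl j)) (fun k => w (inr (enum_rank k)))).
have hP' : polyhedral P' by apply: polyhedral_comp hP _ => -[j|k]; apply: affine_coord.
apply: eq_polyhedral (polyhedral_exists_ord hP') => x; split=> [[u Pu]|[u Pu]].
  by exists (fun k => u (enum_rank k)).
exists (fun i => u (enum_val i)); rewrite /P' /=.
by congr P: Pu; apply: funext => -[j|k] //=; rewrite enum_rankK.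
Qed.

Lemma polyhedral_line_min (S : R -> Prop) (y0 lb : R) :
  polyhedral (fun z : unit -> R => S (z tt)) -> S y0 -> (forall y, S y -> lb <= y) ->
  exists2 y, S y & forall y', S y' -> y <= y'.
Proof.
move=> [I [g [ag gS]]] Sy0 lbS.
pose a i := g i (fun=> 0); pose c i := g i (fun=> 1) - g i (fun=> 0).
have SE y : S y <-> feasible1 a c y.
  by rewrite (gS (fun=> y)); split=> Sy i; have := Sy i; rewrite (affine_unitE (ag i)).
have [y Sy ymin] := feasible1_min (proj1 (SE y0) Sy0) (fun y Sy => lbS y (proj2 (SE y) Sy)).
by exists y => [|y' /SE]; [apply/SE | apply: ymin].
Qed.

End Polyhedra.

Section PolyhedralVectors.
Variables (R : realType) (d : nat).
Notation vec := 'rV[R]_d.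

Definition polyhedral_vec (S : set vec) := polyhedral (fun f : 'I_d -> R => S (\row_i f i)).

Lemma row_eta (v : vec) : \row_i v 0 i = v.
Proof. by apply/rowP => i; rewrite mxE. Qed.

Lemma eq_polyhedral_vec (S1 S2 : set vec) :
  (forall v, S1 v <-> S2 v) -> polyhedral_vec S1 -> polyhedral_vec S2.
Proof. by move=> S12; apply: eq_polyhedral => f. Qed.

Lemma polyhedral_vecT : polyhedral_vec setT.
Proof. exact: polyhedralT. Qed.

Lemma polyhedral_vecI (S1 S2 : set vec) :
  polyhedral_vec S1 -> polyhedral_vec S2 -> polyhedral_vec (S1 `&` S2).
Proof. exact: polyhedralI. Qed.

Lemma polyhedral_vec_bigI (I : finType) (S : I -> set vec) :
  (forall i, polyhedral_vec (S i)) -> polyhedral_vec [set v | forall i, S i v].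
Proof. exact: polyhedral_bigI. Qed.

Lemma polyhedral_vec_imply (P : Prop) (S : set vec) :
  polyhedral_vec S -> polyhedral_vec [set v | P -> S v].
Proof.
case: (pselect P) => [p|np] hS.
  by apply: eq_polyhedral_vec hS => v; split=> [Sv _ //|]; apply.
by apply: eq_polyhedral_vec polyhedral_vecT => v; split=> // _ /np.
Qed.

Lemma affine_row_sum (J K : finType) (h : K -> J) (g : K -> vec) i :
  affine (fun z : J -> R => (\sum_k z (h k) *: g k) 0 i).
Proof.
apply: (eq_affine (f := fun z => \sum_k g k 0 i * z (h k))) => [z|].
  by rewrite summxE; apply: eq_bigr => k _; rewrite mxE mulrC.
by apply: affine_sum => k; apply/affineZ/affine_coord.
Qed.

Lemma polyhedral_vec_shift (S : set vec) (c : vec) :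
  polyhedral_vec S -> polyhedral_vec [set v | S (v - c)].
Proof.
move=> hS; have hA i : affine (fun f : 'I_d -> R => f i - c 0 i).
  by apply: affineB; [apply: affine_coord | apply: affine_cst].
apply: eq_polyhedral (polyhedral_comp hS hA) => f /=.
by have -> : \row_i (f i - c 0 i) = \row_i f i - c by apply/rowP => i; rewrite !mxE.
Qed.

Lemma polyhedral_vec_add (A B : set vec) :
  polyhedral_vec A -> polyhedral_vec B -> polyhedral_vec [set a + b | a in A & b in B].
Proof.
move=> hA hB.
pose Q (w : 'I_d + ('I_d + 'I_d) -> R) :=
  (A (\row_i w (inr (inl i))) /\ B (\row_i w (inr (inr i)))) /\
  forall i, w (inl i) - w (inr (inl i)) - w (inr (inr i)) = 0.
have hQ : polyhedral Q.
  apply: polyhedralI; first apply: polyhedralI.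
  - by apply: (polyhedral_comp (h := fun w i => w (inr (inl i))) hA) => i; apply: affine_coord.
  - by apply: (polyhedral_comp (h := fun w i => w (inr (inr i))) hB) => i; apply: affine_coord.
  - by apply: polyhedral_eq0 => i; apply: affineB; [apply: affineB|]; apply: affine_coord.
apply: eq_polyhedral (polyhedral_exists hQ) => f; split.
  move=> [u [[Au Bu] uE]]; exists (\row_i u (inl i)) => //; exists (\row_i u (inr i)) => //.
  apply/rowP => i; rewrite !mxE.
  by have /eqP := uE i; rewrite /= -addrA -opprD subr_eq0 => /eqP ->.
move=> [a Aa [b Bb abE]]; exists (join_coord (fun i => a 0 i) (fun i => b 0 i)).
rewrite /Q /= !row_eta; split=> // i; apply/eqP.
have := congr1 (fun M : vec => M 0 i) abE; rewrite !mxE => <-.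
by rewrite -addrA -opprD subrr.
Qed.

Lemma polyhedral_vec_cone (G : finType) (g : G -> vec) :
  polyhedral_vec [set v | exists2 l : G -> R, (forall k, 0 <= l k) & v = \sum_k l k *: g k].
Proof.
pose Q (w : 'I_d + G -> R) :=
  (forall k, 0 <= w (inr k)) /\ forall i, w (inl i) - (\sum_k w (inr k) *: g k) 0 i = 0.
have hQ : polyhedral Q.
  apply: polyhedralI; first by apply: polyhedral_ge0 => k; apply: affine_coord.
  by apply: polyhedral_eq0 => i; apply: affineB; [apply: affine_coord | apply: affine_row_sum].
apply: eq_polyhedral (polyhedral_exists hQ) => f; split.
  move=> [l [l0 lE]]; exists l => //; apply/rowP => i; rewrite mxE.
  by apply/eqP; rewrite -subr_eq0; apply/eqP; apply: lE.
move=> [l l0 lE]; exists l; split=> // i /=.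
by rewrite -lE mxE subrr.
Qed.

Lemma polyhedral_vec_line (S : set vec) (v : vec) :
  polyhedral_vec S -> polyhedral (fun z : unit -> R => S (z tt *: v)).
Proof.
move=> hS; have hA i : affine (fun z : unit -> R => z tt * v 0 i).
  apply: (eq_affine (f := fun z => v 0 i * z tt)) => [z|]; first exact: mulrC.
  exact/affineZ/affine_coord.
apply: eq_polyhedral (polyhedral_comp hS hA) => z /=.
by have -> : \row_i (z tt * v 0 i) = z tt *: v by apply/rowP => i; rewrite !mxE.
Qed.

End PolyhedralVectors.

Lemma backward_ind (T : nat) (P : nat -> Prop) :
  P T -> (forall t, (t < T)%N -> P t.+1 -> P t) -> forall t, (t <= T)%N -> P t.
Proof.
move=> PT IH t tT; have [n tn] : exists n, (t + n = T)%N by exists (T - t)%N; rewrite subnKC.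
elim: n t tT tn => [|n IHn] t tT tn; first by rewrite addn0 in tn; rewrite tn.
have tlt : (t < T)%N by rewrite -tn addnS ltnS leq_addr.
by apply: IH tlt (IHn _ tlt _); rewrite addSnnS.
Qed.

Section Filtration.
Variables (Omega : finType) (T : nat) (F : nat -> {set {set Omega}}).
Hypothesis hF : filtration T F.

Lemma sameatom_refl t w : (t <= T)%N -> sameatom F t w w.
Proof.
move=> tT; have /andP[/eqP cov _] := hF.1 t tT.
have : w \in finset.cover (F t) by rewrite cov inE.
by case/finset.bigcupP=> A AF wA; exists A => //; rewrite wA.
Qed.

Lemma sameatom_sym t w w' : sameatom F t w w' -> sameatom F t w' w.
Proof. by case=> A AF /andP[wA w'A]; exists A => //; rewrite wA w'A. Qed.

Lemma sameatom_trans t w1 w2 w3 : (t <= T)%N ->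
  sameatom F t w1 w2 -> sameatom F t w2 w3 -> sameatom F t w1 w3.
Proof.
move=> tT [A AF /andP[w1A w2A]] [B BF /andP[w2B w3B]].
have /and3P[_ /finset.trivIsetP triv _] := hF.1 t tT.
have AB : A = B.
  apply/eqP/negPn/negP => /(triv A B AF BF) /disjointFr /(_ w2A).
  by rewrite w2B.
by exists A => //; rewrite w1A AB w3B.
Qed.

Lemma sameatom_le s t w w' : (s <= t)%N -> (t <= T)%N ->
  sameatom F t w w' -> sameatom F s w w'.
Proof.
move=> + tT; elim: t tT => [|t IH] tT st; first by rewrite leqn0 in st; move/eqP: st => ->.
rewrite leq_eqVlt in st; case/orP: st => [/eqP -> //|st] [A AF /andP[wA w'A]].
apply: IH (ltnW tT) st _; have [B BF AB] := hF.2.2.2 t tT A AF.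
by exists B => //; rewrite !(fintype.subsetP AB).
Qed.

Lemma measP (V : Type) t (x : Omega -> V) :
  meas F t x <-> forall w w', sameatom F t w w' -> x w = x w'.
Proof.
split=> [mx w w' [A AF /andP[wA w'A]]|mx A AF w w' wA w'A]; first exact: mx AF _ _ wA w'A.
by apply: mx; exists A => //; rewrite wA w'A.
Qed.

Lemma meas_le (V : Type) s t (x : Omega -> V) : (s <= t)%N -> (t <= T)%N ->
  meas F s x -> meas F t x.
Proof.
by move=> st tT /measP mx; apply/measP => w w' /(sameatom_le st tT); apply: mx.
Qed.

Lemma meas_map (U V : Type) t (f : U -> V) (x : Omega -> U) :
  meas F t x -> meas F t (fun w => f (x w)).
Proof. by move=> mx A AF w w' wA w'A; rewrite (mx A AF w w'). Qed.

Lemma meas_map2 (U1 U2 V : Type) t (f : U1 -> U2 -> V) (x1 : Omega -> U1) (x2 : Omega -> U2) :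
  meas F t x1 -> meas F t x2 -> meas F t (fun w => f (x1 w) (x2 w)).
Proof. by move=> m1 m2 A AF w w' wA w'A; rewrite (m1 A AF w w') ?(m2 A AF w w'). Qed.

Lemma eq_meas (V : Type) t (x y : Omega -> V) : x =1 y -> meas F t x -> meas F t y.
Proof. by move=> xy mx A AF w w' wA w'A; rewrite -!xy (mx A AF w w'). Qed.

Lemma meas_sum (V : nmodType) t (I : finType) (P : pred I) (f : I -> Omega -> V) :
  (forall i, meas F t (f i)) -> meas F t (fun w => \sum_(i | P i) f i w).
Proof.
by move=> mf A AF w w' wA w'A; apply: eq_bigr => i _; rewrite (mf i A AF w w').
Qed.

Lemma Omega_inhabited : inhabited Omega.
Proof.
have /and3P[_ _] := hF.1 0%N (leq0n T); rewrite hF.2.1 inE eq_sym.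
case: (pickP (fun _ : Omega => true)) => [w _ _|none]; first exact: inhabits w.
by case/negP; apply/eqP/setP => w; rewrite !inE none.
Qed.

Definition sameatomb t (w w' : Omega) : bool :=
  [exists A : {set Omega}, [&& A \in F t, w \in A & w' \in A]].

Lemma sameatomP t w w' : reflect (sameatom F t w w') (sameatomb t w w').
Proof.
apply: (iffP existsP) => [[A /and3P[AF wA w'A]]|[A AF /andP[wA w'A]]].
  by exists A => //; rewrite wA w'A.
by exists A; rewrite AF wA w'A.
Qed.

Lemma meas_sameatomb t w : (t <= T)%N -> meas F t (sameatomb t w).
Proof.
move=> tT; apply/measP => w1 w2 w12.
apply/sameatomP/sameatomP => [w1w|w2w].
  exact: sameatom_trans w1w w12.
exact: sameatom_trans w2w (sameatom_sym w12).
Qed.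

Definition atom_rep t (w : Omega) : Omega := odflt w [pick w' | sameatomb t w w'].

Lemma sameatom_rep t w : (t <= T)%N -> sameatom F t w (atom_rep t w).
Proof.
rewrite /atom_rep => tT; case: pickP => [w' /sameatomP //|/(_ w)].
by move/sameatomP: (sameatom_refl w tT) => ->.
Qed.

Lemma atom_rep_eq t w w' : (t <= T)%N -> sameatom F t w w' -> atom_rep t w = atom_rep t w'.
Proof.
move=> tT ww'; rewrite /atom_rep.
have same : sameatomb t w =1 sameatomb t w'.
  move=> w''; apply/sameatomP/sameatomP => [|w'w''].
    exact: sameatom_trans (sameatom_sym ww').
  exact: sameatom_trans ww' w'w''.
rewrite (eq_pick same); case: pickP => // /(_ w).
by move/sameatomP: (sameatom_sym ww') => ->.
Qed.

Lemma meas_glue (V : Type) t s (f : Omega -> Omega -> V) : (t <= s)%N -> (s <= T)%N ->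
  (forall c, meas F s (f c)) -> meas F s (fun w => f (atom_rep t w) w).
Proof.
move=> ts sT mf; apply/measP => w w' ww'.
rewrite (atom_rep_eq (leq_trans ts sT) (sameatom_le ts sT ww')).
by move/measP: (mf (atom_rep t w')); apply.
Qed.

End Filtration.

Section SolvencyCones.
Variables (R : realType) (d : nat) (Omega : finType) (T : nat)
  (F : nat -> {set {set Omega}}) (pi : nat -> Omega -> 'I_d -> 'I_d -> R).
Hypothesis hpi : exchange_rates T F pi.
Notation vec := 'rV[R]_d.

Definition Kgen t w (s : 'I_d + 'I_d * 'I_d) : vec :=
  match s with inl k => e k | inr (j, k) => pi t w j k *: e j - e k end.

Lemma KconeE t w v :
  Kcone pi t w v <-> exists2 l, (forall s, 0 <= l s) & v = \sum_s l s *: Kgen t w s.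
Proof.
have sumE (l : 'I_d + 'I_d * 'I_d -> R) : \sum_s l s *: Kgen t w s =
    \sum_k l (inl k) *: e k + \sum_j \sum_k l (inr (j, k)) *: (pi t w j k *: e j - e k).
  by rewrite big_sumType pair_bigA; congr (_ + _); apply: eq_bigr => -[j k].
split=> [[a [b [a0 [b0 ->]]]]|[l l0 ->]].
  exists (fun s => match s with inl k => a k | inr (j, k) => b j k end); first by case=> [|[]].
  by rewrite sumE.
exists (fun k => l (inl k)), (fun j k => l (inr (j, k))).
by rewrite sumE; do !split=> *.
Qed.

Lemma polyhedral_vec_Kcone t w : polyhedral_vec (Kcone pi t w).
Proof.
apply: eq_polyhedral_vec (polyhedral_vec_cone (Kgen t w)) => v.
by rewrite KconeE.
Qed.

Lemma Kcone0 t w : Kcone pi t w 0.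
Proof. by apply/KconeE; exists (fun=> 0) => //; rewrite big1 // => s _; rewrite scale0r. Qed.

Lemma KconeD t w u v : Kcone pi t w u -> Kcone pi t w v -> Kcone pi t w (u + v).
Proof.
move=> /KconeE[l l0 ->] /KconeE[l' l'0 ->]; apply/KconeE.
exists (fun s => l s + l' s); first by move=> s; rewrite addr_ge0.
by rewrite -big_split; apply: eq_bigr => s _; rewrite scalerDl.
Qed.

Lemma KconeZ t w c v : 0 <= c -> Kcone pi t w v -> Kcone pi t w (c *: v).
Proof.
move=> c0 /KconeE[l l0 ->]; apply/KconeE.
exists (fun s => c * l s); first by move=> s; rewrite mulr_ge0.
by rewrite scaler_sumr; apply: eq_bigr => s _; rewrite scalerA.
Qed.

Lemma Kcone_sum t w (I : finType) (P : pred I) (f : I -> vec) :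
  (forall i, P i -> Kcone pi t w (f i)) -> Kcone pi t w (\sum_(i | P i) f i).
Proof. by move=> Kf; apply: big_ind => //; [apply: Kcone0 | apply: KconeD]. Qed.

Lemma Kcone_gen t w s : Kcone pi t w (Kgen t w s).
Proof.
apply/KconeE; exists (fun s' => (s' == s)%:R) => [s'|]; first by case: (_ == _).
by rewrite (bigD1 s) //= eqxx scale1r big1 ?addr0 // => s' /negbTE ->; rewrite scale0r.
Qed.

Lemma Kcone_sameatom t w w' v : (t <= T)%N -> sameatom F t w w' ->
  Kcone pi t w v -> Kcone pi t w' v.
Proof. by move=> tT ww'; move/(measP F): (hpi tT).1 => /(_ _ _ ww') piE; rewrite /Kcone piE. Qed.

Lemma Kcone_dominated t w j (u : vec) (M : R) :
  \sum_k `|u 0 k| * pi t w j k <= M -> Kcone pi t w (M *: e j - u).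
Proof.
move=> uM; set S := \sum_k _ in uM.
have termE k : `|u 0 k| *: Kgen t w (inr (j, k)) + (`|u 0 k| - u 0 k) *: Kgen t w (inl k) =
    (`|u 0 k| * pi t w j k) *: e j - u 0 k *: e k.
  by apply/rowP => i; rewrite !mxE; ring.
have -> : M *: e j - u = (M - S) *: Kgen t w (inl j) +
    \sum_k (`|u 0 k| *: Kgen t w (inr (j, k)) + (`|u 0 k| - u 0 k) *: Kgen t w (inl k)).
  have uE : \sum_k u 0 k *: e k = u by rewrite [RHS]row_sum_delta.
  rewrite (eq_bigr _ (fun k _ => termE k)) sumrB -scaler_suml uE -/S /=.
  by rewrite scalerBl addrA subrK.
apply: KconeD; first by apply: KconeZ (Kcone_gen _ _ _); rewrite subr_ge0.
apply: Kcone_sum => k _; apply: KconeD; apply: KconeZ (Kcone_gen _ _ _) => //.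
by rewrite subr_ge0 ler_norm.
Qed.

End SolvencyCones.

Section DeferredSolvency.
Variables (R : realType) (d : nat) (Omega : finType) (T : nat)
  (F : nat -> {set {set Omega}}) (pi : nat -> Omega -> 'I_d -> 'I_d -> R).
Hypothesis hF : filtration T F.
Hypothesis hpi : exchange_rates T F pi.
Notation vec := 'rV[R]_d.
Notation inK := (inK F pi).
Notation inQ := (inQ T F pi).
Notation Qnode := (Qnode T F pi).

(* [inQ t z] unfolds to [meas F t z /\ exists y, deferral t z y]. *)
Definition deferral t (z : Omega -> vec) (y : nat -> Omega -> vec) : Prop :=
  (forall s, (t < s <= T.+1)%N -> meas F s.-1 (y s)) /\ (forall w, y T.+1 w = 0) /\
  inK t (fun w => z w - y t.+1 w) /\
  (forall s, (t < s <= T)%N -> inK s (fun w => y s w - y s.+1 w)).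

Lemma eq_inK t (x y : Omega -> vec) : x =1 y -> inK t x -> inK t y.
Proof. by move=> xy [mx Kx]; split=> [|w]; [apply: eq_meas mx | rewrite -xy]. Qed.

Lemma inK0 t : inK t (fun=> 0).
Proof. by split=> // w; apply: Kcone0. Qed.

Lemma inK_inQ t z : (t <= T)%N -> inK t z -> inQ t z.
Proof.
move=> tT Kz; split; first exact: Kz.1.
exists (fun _ _ => 0); split=> //; split=> //; split.
  by apply: eq_inK Kz => w; rewrite subr0.
by move=> s _; apply: eq_inK (inK0 s) => w; rewrite subr0.
Qed.

Lemma inK_glue t s (f : Omega -> Omega -> vec) : (t <= s)%N -> (s <= T)%N ->
  (forall c, inK s (f c)) -> inK s (fun w => f (atom_rep F t w) w).
Proof.
move=> ts sT Kf; split=> [|w]; last exact: (Kf _).2.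
by apply: (meas_glue hF) => // c; apply: (Kf c).1.
Qed.

Lemma inQ_glue t (f : Omega -> Omega -> vec) : (t <= T)%N ->
  (forall c, inQ t (f c)) -> inQ t (fun w => f (atom_rep F t w) w).
Proof.
move=> tT Qf; have [y yP] := choice (fun c => (Qf c).2).
split; first by apply: (meas_glue hF) => // c; apply: (Qf c).1.
exists (fun s w => y (atom_rep F t w) s w); split.
  move=> s /andP[ts sT]; apply: (meas_glue hF (f := fun c => y c s)) => [||c]; [lia | lia |].
  by apply: (yP c).1; rewrite ts.
split; first by move=> w; apply: (yP _).2.1.
split; first by apply: (inK_glue (f := fun c w => f c w - y c t.+1 w)) => // c; apply: (yP c).2.2.1.
move=> s /andP[ts sT].
apply: (inK_glue (f := fun c w => y c s w - y c s.+1 w)) => [||c]; [exact: ltnW | by [] |].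
by apply: (yP c).2.2.2; rewrite ts.
Qed.

Lemma inQ_T z : inQ T z <-> inK T z.
Proof.
split=> [[_ [y [_ [yT [Kz _]]]]]|]; last exact: inK_inQ.
by apply: eq_inK Kz => w; rewrite yT subr0.
Qed.

Lemma inQ_succ t z : (t < T)%N ->
  inQ t z <-> exists2 u, meas F t u /\ inQ t.+1 u & inK t (fun w => z w - u w).
Proof.
move=> tT; split=> [[mz [y [my [yT [Kz Ky]]]]]|[u [mu [_ [y [my [yT [Ku Ky]]]]]] Kzu]].
  have myt : meas F t (y t.+1) by apply: (my t.+1); rewrite ltnSn ltnS ltnW.
  exists (y t.+1); last exact: Kz.
  split=> //; split; first exact (meas_le hF (leqnSn t) tT myt).
  exists y; split=> [s /andP[ts sT]|]; first by apply: my; rewrite sT (ltn_trans _ ts).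
  split=> //; split; first by apply: Ky; rewrite ltnSn.
  by move=> s /andP[ts sT]; apply: Ky; rewrite sT (ltn_trans _ ts).
split.
  apply: eq_meas (meas_map2 (fun a b => a + b) Kzu.1 mu) => w.
  by rewrite subrK.
exists (fun s => if s == t.+1 then u else y s); split.
  move=> s /andP[ts sT]; case: eqP => [->|/eqP st1] //.
  by apply: (my s); lia.
split; first by move=> w; rewrite eqSS (gtn_eqF tT).
split; first by rewrite eqxx.
move=> s /andP[ts sT]; rewrite eqSS (gtn_eqF ts).
case: eqP => [->|/eqP st1]; first exact: Ku.
by apply: Ky; lia.
Qed.

Definition on_atom t w (c : vec) : Omega -> vec :=
  fun w' => if sameatomb F t w w' then c else 0.

Lemma meas_on_atom t w c : (t <= T)%N -> meas F t (on_atom t w c).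
Proof.
by move=> tT; exact (meas_map (fun b : bool => if b then c else 0) (meas_sameatomb hF w tT)).
Qed.

Lemma on_atom_self t w c : (t <= T)%N -> on_atom t w c w = c.
Proof. by move=> tT; rewrite /on_atom; move/sameatomP: (sameatom_refl hF w tT) => ->. Qed.

Lemma inK_on_atom t w c : (t <= T)%N -> Kcone pi t w c -> inK t (on_atom t w c).
Proof.
move=> tT Kc; split=> [|w']; first exact: meas_on_atom.
rewrite /on_atom; case: sameatomP => [ww'|_]; last exact: Kcone0.
exact (Kcone_sameatom hpi tT ww' Kc).
Qed.

Lemma Qnode0 t w : (t <= T)%N -> Qnode t w 0.
Proof. by move=> tT; exists (fun=> 0); split=> //; apply: inK_inQ (inK0 t). Qed.

Lemma Qnode_Kcone t w v : (t <= T)%N -> Kcone pi t w v -> Qnode t w v.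
Proof.
move=> tT Kv; exists (on_atom t w v); split; last exact: on_atom_self.
by apply: inK_inQ (inK_on_atom tT Kv).
Qed.

Lemma Qnode_sameatom t w w' v : sameatom F t w w' -> Qnode t w v -> Qnode t w' v.
Proof.
by move=> ww' [z [Qz <-]]; exists z; split=> //; move/measP: Qz.1; apply; apply: sameatom_sym.
Qed.

(* Pick, for each node, an element of Q_t taking the prescribed value there, and glue. *)
Lemma Qnode_inQ t z : (t <= T)%N -> meas F t z -> (forall w, Qnode t w (z w)) -> inQ t z.
Proof.
move=> tT mz Qz; have [f fP] := choice Qz.
suff -> : z = (fun w => f (atom_rep F t w) w) by apply: inQ_glue => // c; apply: (fP c).1.
apply: funext => w; set r := atom_rep F t w.
have wr : sameatom F t w r := sameatom_rep hF w tT.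
move/measP: mz => /(_ _ _ wr) ->; rewrite -(fP r).2.
by move/measP: (fP r).1.1 => /(_ _ _ (sameatom_sym wr)).
Qed.

Lemma QnodeT w : Qnode T w = Kcone pi T w.
Proof.
apply/predeqP => v; split=> [[z [/inQ_T [_ Kz] <-]] //|]; exact: Qnode_Kcone.
Qed.

Lemma Qnode_succ t w : (t < T)%N -> Qnode t w =
  [set a + b | a in Kcone pi t w & b in [set b | forall w', sameatom F t w w' -> Qnode t.+1 w' b]].
Proof.
move=> tT; have tT' := ltnW tT; apply/predeqP => v; split.
  move=> [z [/(inQ_succ _ tT) [u [mu Qu] Kzu] <-]].
  exists (z w - u w); first exact: Kzu.2.
  exists (u w); last exact: subrK.
  move=> w' ww'; exists u; split=> //.
  by move/measP: mu => /(_ _ _ (sameatom_sym ww')).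
move=> [a Ka [b Wb <-]].
have Qb : inQ t.+1 (on_atom t w b).
  apply: Qnode_inQ => // [|w']; first exact (meas_le hF (leqnSn t) tT (meas_on_atom w b tT')).
  by rewrite /on_atom; case: sameatomP => [/Wb //|_]; apply: Qnode0.
exists (fun w' => on_atom t w a w' + on_atom t w b w'); split; last by rewrite !on_atom_self.
apply/(inQ_succ _ tT); exists (on_atom t w b); first by split=> //; apply: meas_on_atom.
by apply: eq_inK (inK_on_atom tT' Ka) => w'; rewrite addrK.
Qed.

Lemma polyhedral_vec_Qnode t w : (t <= T)%N -> polyhedral_vec (Qnode t w).
Proof.
move=> tT; move: w; elim/backward_ind: t / tT => [|t tT IH] w.
  by rewrite QnodeT; apply: polyhedral_vec_Kcone.
rewrite Qnode_succ //; apply: polyhedral_vec_add; first exact: polyhedral_vec_Kcone.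
by apply: polyhedral_vec_bigI => w'; apply: polyhedral_vec_imply; apply: IH.
Qed.

End DeferredSolvency.

Section HedgingSets.
Variables (R : realType) (d : nat) (Omega : finType) (T : nat)
  (F : nat -> {set {set Omega}}) (pi : nat -> Omega -> 'I_d -> 'I_d -> R)
  (xi : nat -> Omega -> 'rV[R]_d).
Hypothesis hF : filtration T F.
Hypothesis hpi : exchange_rates T F pi.
Notation Qnode := (Qnode T F pi).
Notation Uad := (Uad T F pi xi).
Notation Zad := (Zad T F pi xi).

Lemma UadE t w v : Uad t w v <-> Qnode t w (v - xi t w).
Proof.
split=> [[q Qq ->]|Qv]; first by rewrite addrC addKr.
by exists (v - xi t w); last rewrite addrC subrK.
Qed.

Lemma ZadT w : Zad T w = Uad T w.
Proof. by rewrite /Zad subnn. Qed.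

Lemma Zad_succ t w : (t < T)%N -> Zad t w = Uad t w `&`
  [set a + b | a in [set a | forall w', sameatom F t w w' -> Zad t.+1 w' a] & b in Qnode t w].
Proof.
move=> tT; rewrite /Zad (_ : (T - t = (T - t.+1).+1)%N) /=; last lia.
by rewrite (_ : (T - (T - t.+1).+1 = t)%N) //; lia.
Qed.

Lemma Zad_Uad t w v : (t <= T)%N -> Zad t w v -> Uad t w v.
Proof.
rewrite leq_eqVlt => /predU1P[->|tT]; first by rewrite ZadT.
by rewrite Zad_succ // => -[].
Qed.

Lemma polyhedral_vec_Uad t w : (t <= T)%N -> polyhedral_vec (Uad t w).
Proof.
move=> tT; have := polyhedral_vec_shift (xi t w) (polyhedral_vec_Qnode hF hpi w tT).
by apply: eq_polyhedral_vec => v; rewrite UadE.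
Qed.

Lemma polyhedral_vec_Zad t w : (t <= T)%N -> polyhedral_vec (Zad t w).
Proof.
move=> tT; move: w; elim/backward_ind: t / tT => [|t tT IH] w.
  by rewrite ZadT; apply: polyhedral_vec_Uad.
have tT' := ltnW tT; rewrite Zad_succ //.
apply: polyhedral_vecI; first exact: polyhedral_vec_Uad.
apply: polyhedral_vec_add; last exact: polyhedral_vec_Qnode.
by apply: polyhedral_vec_bigI => w'; apply: polyhedral_vec_imply; apply: IH.
Qed.

Lemma polyhedral_vec_Zad0 : polyhedral_vec (Zad0 T F pi xi).
Proof. by apply: polyhedral_vec_bigI => w; apply: polyhedral_vec_Zad. Qed.

End HedgingSets.

Section StoppingTimes.
Variables (R : realType) (Omega : finType) (T : nat) (F : nat -> {set {set Omega}}).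
Hypothesis hF : filtration T F.

Definition stopping (tau : Omega -> nat) :=
  (forall w, (tau w <= T)%N) /\ forall s, meas F s (fun w => (tau w <= s)%N).

Definition stop_at (tau : Omega -> nat) : nat -> Omega -> R := fun s w => (tau w == s)%:R.

Lemma stopping_cst c : (c <= T)%N -> stopping (fun=> c).
Proof. by []. Qed.

Lemma stopping_min tau t : stopping tau -> stopping (fun w => minn (tau w) t).
Proof.
move=> [tauT mtau]; split=> [w|s]; first by rewrite geq_min tauT.
by apply: eq_meas (meas_map (fun b => b || (t <= s)%N) (mtau s)) => w; rewrite geq_min.
Qed.

Lemma stopping_max tau t : stopping tau -> (t <= T)%N -> stopping (fun w => maxn (tau w) t).
Proof.
move=> [tauT mtau] tT; split=> [w|s]; first by rewrite geq_max tauT.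
by apply: eq_meas (meas_map (fun b => b && (t <= s)%N) (mtau s)) => w; rewrite geq_max.
Qed.

Lemma mixed_stop_at tau : stopping tau -> mixed T F (stop_at tau).
Proof.
move=> [tauT mtau]; split=> [s sT|]; last split=> [s w|]; last split=> [w|s w sT].
- apply: (meas_map (fun b : bool => b%:R)).
  case: s sT => [|s] sT; first by apply: eq_meas (mtau 0%N) => w; rewrite leqn0.
  apply: eq_meas (meas_map2 (fun a b => a && ~~ b) (mtau s.+1) (meas_le hF (leqnSn s) sT (mtau s))).
  by move=> w; rewrite -ltnNge eqn_leq.
- by rewrite /stop_at; case: (_ == _); rewrite ?lexx ?ler01.
- have tw : (tau w < T.+1)%N by rewrite ltnS tauT.
  rewrite (bigD1 (Ordinal tw)) //= /stop_at eqxx big1 ?addr0 // => i /eqP iw.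
  by case: eqP => // wi; case: iw; apply: val_inj; rewrite /= wi.
- by rewrite /stop_at; case: eqP => // tws; move: (tauT w); rewrite tws leqNgt sT.
Qed.

End StoppingTimes.

Section SuperhedgingToZad.
Variables (R : realType) (d : nat) (Omega : finType) (T : nat)
  (F : nat -> {set {set Omega}}) (pi : nat -> Omega -> 'I_d -> 'I_d -> R)
  (xi : nat -> Omega -> 'rV[R]_d).
Hypothesis hF : filtration T F.
Hypothesis hxi : adapted_option T F xi.
Variable Y : (nat -> Omega -> R) -> nat -> Omega -> 'rV[R]_d.
Hypothesis hY : PhiAg T F pi xi Y.
Notation inQ := (inQ T F pi).
Notation Uad := (Uad T F pi xi).
Notation Zad := (Zad T F pi xi).

Lemma inQ_Y_stopped chi t : mixed T F chi -> (t <= T)%N ->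
  (forall s w, (t < s)%N -> chi s w = 0) -> inQ t (fun w => Y chi t w - chi t w *: xi t w).
Proof.
move=> mchi tT chi0; have [[mY Y0] KY] := hY.1 chi mchi.
split.
  have mYt : meas F t (Y chi t).
    by apply: (meas_le hF (leq_pred t) tT); apply: (mY t); rewrite ltnW.
  exact (meas_map2 (fun a b => a - b) mYt (meas_map2 (fun c v => c *: v) (mchi.1 t tT) (hxi tT))).
exists (Y chi); split=> [s /andP[_ sT]|]; first exact: mY.
split; first by move=> w; apply: Y0.
split; first exact: KY.
by move=> s /andP[ts sT]; apply: eq_inK (KY s sT) => w; rewrite chi0 // scale0r subr0.
Qed.

Lemma inQ_Y_idle chi t : mixed T F chi -> (t <= T)%N ->
  (forall w, chi t w = 0) -> inQ t (fun w => Y chi t w - Y chi t.+1 w).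
Proof.
move=> mchi tT chi0; apply: inK_inQ => //.
by apply: eq_inK ((hY.1 chi mchi).2 t tT) => w; rewrite chi0 scale0r subr0.
Qed.

Lemma Y_stop_at_eq tau tau' t w : stopping T F tau -> stopping T F tau' ->
  (t <= tau w)%N -> (t <= tau' w)%N -> Y (stop_at R tau) t w = Y (stop_at R tau') t w.
Proof.
move=> st st' tw tw'; apply: hY.2; try exact: mixed_stop_at.
by move=> s st_; rewrite /stop_at !gtn_eqF //; lia.
Qed.

Lemma Y_Uad tau t w : stopping T F tau -> (t <= T)%N -> (t <= tau w)%N ->
  Uad t w (Y (stop_at R tau) t w).
Proof.
move=> st tT tw; pose tau1 w := minn (tau w) t.
have st1 : stopping T F tau1 by apply: stopping_min.
rewrite (Y_stop_at_eq st st1) ?leq_min ?tw ?leqnn //.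
apply/UadE; exists (fun w' => Y (stop_at R tau1) t w' - stop_at R tau1 t w' *: xi t w'); split.
  apply: inQ_Y_stopped => //; first exact: mixed_stop_at.
  by move=> s w' ts; rewrite /stop_at /tau1 ltn_eqF //; lia.
by rewrite /stop_at /tau1 (minn_idPr tw) eqxx scale1r.
Qed.

Lemma Y_Zad tau t w : stopping T F tau -> (t <= T)%N -> (t <= tau w)%N ->
  Zad t w (Y (stop_at R tau) t w).
Proof.
move=> st tT tw; move: tau w st tw; elim/backward_ind: t / tT => [|t tlt IH] tau w st tw.
  by rewrite ZadT; apply: Y_Uad.
rewrite Zad_succ //; split; first by apply: Y_Uad => //; apply: ltnW.
pose tau2 w := maxn (tau w) t.+1; have st2 : stopping T F tau2 by apply: stopping_max.
have chi2t w' : stop_at R tau2 t w' = 0 by rewrite /stop_at gtn_eqF // leq_max ltnSn orbT.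
rewrite (Y_stop_at_eq st st2) ?leq_max ?tw //.
have mY1 : meas F t (Y (stop_at R tau2) t.+1).
  by have [[mY _] _] := hY.1 _ (mixed_stop_at _ hF st2); apply: (mY t.+1); rewrite ltnS ltnW.
exists (Y (stop_at R tau2) t.+1 w).
  move=> w' ww'; move/measP: mY1 => /(_ _ _ ww') ->.
  by apply: IH; rewrite ?leq_max ?leqnn ?orbT.
exists (Y (stop_at R tau2) t w - Y (stop_at R tau2) t.+1 w); last by rewrite addrC subrK.
exists (fun w' => Y (stop_at R tau2) t w' - Y (stop_at R tau2) t.+1 w'); split=> //.
exact: inQ_Y_idle (mixed_stop_at _ hF st2) (ltnW tlt) chi2t.
Qed.

Lemma PhiAg_Zad0 x : Yzero T F Y x -> Zad0 T F pi xi x.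
Proof.
move=> Yx w; have st : stopping T F (fun=> T) by apply: stopping_cst.
by rewrite -(Yx _ (mixed_stop_at _ hF st) w); apply: Y_Zad.
Qed.

End SuperhedgingToZad.

Section ZadToSuperhedging.
Variables (R : realType) (d : nat) (Omega : finType) (T : nat)
  (F : nat -> {set {set Omega}}) (pi : nat -> Omega -> 'I_d -> 'I_d -> R)
  (xi : nat -> Omega -> 'rV[R]_d).
Hypothesis hF : filtration T F.
Hypothesis hxi : adapted_option T F xi.
Notation vec := 'rV[R]_d.
Notation inQ := (inQ T F pi).
Notation Zad := (Zad T F pi xi).

Lemma Zad_inQ_payoff t v : (t <= T)%N -> meas F t v ->
  (forall w, Zad t w (v w)) -> inQ t (fun w => v w - xi t w).
Proof.
move=> tT mv Zv; apply: Qnode_inQ => // [|w].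
  exact (meas_map2 (fun a b => a - b) mv (hxi tT)).
by apply/UadE; apply: Zad_Uad.
Qed.

Lemma Zad_step t v : (t < T)%N -> meas F t v -> (forall w, Zad t w (v w)) ->
  exists v', [/\ meas F t v', forall w, Zad t.+1 w (v' w) & inQ t (fun w => v w - v' w)].
Proof.
move=> tT mv Zv; have tT' := ltnW tT.
have aex w : exists a,
    (forall w', sameatom F t w w' -> Zad t.+1 w' a) /\ Qnode T F pi t w (v w - a).
  have := Zv w; rewrite Zad_succ // => -[_ [a Wa [b Qb abE]]].
  by exists a; split=> //; rewrite -abE addrC addKr.
have [a aP] := choice aex.
pose r w := atom_rep F t w; have wr w : sameatom F t w (r w) := sameatom_rep hF w tT'.
have ma : meas F t (fun w => a (r w)).
  exact (meas_glue hF (f := fun c _ => a c) (leqnn t) tT' (fun c A AF w w' _ _ => erefl)).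
exists (fun w => a (r w)); split=> // [w|]; first exact: (aP _).1 _ (sameatom_sym (wr w)).
apply: Qnode_inQ => // [|w]; first exact (meas_map2 (fun a b => a - b) mv ma).
apply: Qnode_sameatom (sameatom_sym (wr w)) _.
by move/measP: mv => /(_ _ _ (wr w)) ->; apply: (aP _).2.
Qed.

Lemma Zad_chain x : Zad0 T F pi xi x -> exists z : nat -> Omega -> vec,
  [/\ forall w, z 0%N w = x,
      forall t, (t <= T)%N -> meas F t.-1 (z t) /\ forall w, Zad t w (z t w)
    & forall t, (t < T)%N -> inQ t (fun w => z t w - z t.+1 w)].
Proof.
move=> Zx.
have stepex (tv : nat * (Omega -> vec)) : exists v', (tv.1 < T)%N ->
    meas F tv.1 tv.2 -> (forall w, Zad tv.1 w (tv.2 w)) ->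
    [/\ meas F tv.1 v', forall w, Zad tv.1.+1 w (v' w) & inQ tv.1 (fun w => tv.2 w - v' w)].
  case: tv => t v /=; case: (ltnP t T) => [tT|_]; last by exists v.
  case: (pselect (meas F t v /\ forall w, Zad t w (v w))) => [[mv Zv]|nZ].
    by have [v' v'P] := Zad_step tT mv Zv; exists v'.
  by exists v => _ mv Zv; case: nZ.
have [step0 stepP0] := choice stepex.
pose step t v := step0 (t, v); have stepP t v := stepP0 (t, v).
pose z t := iteri t step (fun=> x).
have zP t : (t <= T)%N -> meas F t.-1 (z t) /\ forall w, Zad t w (z t w).
  elim: t => [_|t IH tT]; first by split.
  have [mz Zz] := IH (ltnW tT).
  by have [] := stepP t (z t) tT (meas_le hF (leq_pred t) (ltnW tT) mz) Zz.
exists z; split=> // t tT; have [mz Zz] := zP t (ltnW tT).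
by have [] := stepP t (z t) tT (meas_le hF (leq_pred t) (ltnW tT) mz) Zz.
Qed.

End ZadToSuperhedging.

Section HedgeConstruction.
Variables (R : realType) (d : nat) (Omega : finType) (T : nat)
  (F : nat -> {set {set Omega}}) (pi : nat -> Omega -> 'I_d -> 'I_d -> R)
  (xi : nat -> Omega -> 'rV[R]_d).
Hypothesis hF : filtration T F.
Hypothesis hxi : adapted_option T F xi.
Notation vec := 'rV[R]_d.
Notation inK := (inK F pi).

Variables (x : vec) (z : nat -> Omega -> vec) (y1 y2 : nat -> nat -> Omega -> vec).
Hypothesis z0 : forall w, z 0%N w = x.
Hypothesis mz : forall t, (t <= T)%N -> meas F t.-1 (z t).
Hypothesis y1P : forall t, (t <= T)%N -> deferral T F pi t (fun w => z t w - xi t w) (y1 t).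
Hypothesis y2P : forall t, (t < T)%N -> deferral T F pi t (fun w => z t w - z t.+1 w) (y2 t).

Definition remaining (chi : nat -> Omega -> R) t w := 1 - \sum_(s < t) chi s w.

(* At time s the exercised fraction chi s of the position z s pays the option and
   is liquidated along y1 s; the fraction still unexercised afterwards is carried
   over to z s.+1 along y2 s. *)
Definition flow chi s u w := chi s w *: y1 s u w + (remaining chi s w - chi s w) *: y2 s u w.

Definition hedge chi t w :=
  if (t <= T)%N then remaining chi t w *: z t w + \sum_(s < t) flow chi s t w else 0.

Section MixedStoppingTime.
Variable chi : nat -> Omega -> R.
Hypothesis hchi : mixed T F chi.

Lemma remainingS t w : remaining chi t.+1 w = remaining chi t w - chi t w.
Proof. by rewrite /remaining big_ord_recr /= opprD addrA. Qed.

Lemma remaining_T w : remaining chi T w = chi T w.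
Proof. by apply/eqP; rewrite subr_eq -(hchi.2.2.1 w) big_ord_recr /= addrC. Qed.

Lemma remaining_ge0 t w : (t <= T.+1)%N -> 0 <= remaining chi t w.
Proof.
move=> tT; rewrite subr_ge0 -(hchi.2.2.1 w) -!(big_mkord xpredT (chi ^~ w)).
rewrite [X in _ <= X](big_cat_nat _ tT) //= lerDl.
by apply: sumr_ge0 => s _; case/andP: (hchi.2.1 s w).
Qed.

Lemma meas_remaining t : (t <= T.+1)%N -> meas F t.-1 (remaining chi t).
Proof.
move=> tT; apply: (meas_map (fun a => 1 - a)); apply: meas_sum => s.
by apply: (meas_le hF _ _ (hchi.1 s _)); move: (ltn_ord s); lia.
Qed.

Lemma meas_flow s t : (s < t)%N -> (t <= T)%N -> meas F t.-1 (flow chi s t).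
Proof.
move=> st tT; have sT : (s < T)%N by apply: leq_trans st tT.
have [st' tT' sT'] : [/\ s <= t.-1, t.-1 <= T & s <= T.+1]%N by split; lia.
have mchi : meas F t.-1 (chi s) := meas_le hF st' tT' (hchi.1 s (ltnW sT)).
have mrem : meas F t.-1 (remaining chi s).
  exact (meas_le hF (leq_trans (leq_pred s) st') tT' (meas_remaining sT')).
have stT : (s < t <= T.+1)%N by rewrite st leqW.
have my1 : meas F t.-1 (y1 s t) := (y1P (ltnW sT)).1 t stT.
have my2 : meas F t.-1 (y2 s t) := (y2P sT).1 t stT.
exact (meas_map2 (fun a b => a + b) (meas_map2 (fun c v => c *: v) mchi my1)
  (meas_map2 (fun c v => c *: v) (meas_map2 (fun a b => a - b) mrem mchi) my2)).
Qed.

Lemma hedge_strategy : strategy T F (hedge chi).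
Proof.
split=> [t tT|t w tT]; last by rewrite /hedge leqNgt tT.
case: (leqP t T) => [tT'|Tt].
  apply: eq_meas (fun w => remaining chi t w *: z t w + \sum_(s < t) flow chi s t w) _ _ _.
    by move=> w; rewrite /hedge tT'.
  apply: meas_map2 (meas_map2 (fun c v => c *: v) (meas_remaining tT) (mz tT')) _.
  by apply: meas_sum => s; apply: meas_flow.
by apply: eq_meas (fun=> 0) _ _ _ => // w; rewrite /hedge leqNgt Tt.
Qed.

Lemma Kcone_flow s t w : (s < t)%N -> (t <= T)%N ->
  Kcone pi t w (flow chi s t w - flow chi s t.+1 w).
Proof.
move=> st tT; have sT : (s < T)%N by apply: leq_trans st tT.
have stT : (s < t <= T)%N by rewrite st tT.
have -> : flow chi s t w - flow chi s t.+1 w =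
    chi s w *: (y1 s t w - y1 s t.+1 w) + (remaining chi s w - chi s w) *: (y2 s t w - y2 s t.+1 w).
  by rewrite /flow !scalerBr opprD addrACA.
apply: KconeD; apply: KconeZ.
- by case/andP: (hchi.2.1 s w).
- exact: ((y1P (ltnW sT)).2.2.2 t stT).2.
- by rewrite -remainingS remaining_ge0 // ltnS ltnW.
- exact: ((y2P sT).2.2.2 t stT).2.
Qed.

Lemma Kcone_hedge_last w :
  Kcone pi T w (hedge chi T w - chi T w *: xi T w - hedge chi T.+1 w).
Proof.
have flowT s : (s < T)%N -> flow chi s T.+1 w = 0.
  move=> sT; rewrite /flow (y1P (ltnW sT)).2.1 (y2P sT).2.1.
  by rewrite !scaler0 addr0.
rewrite /hedge leqnn ltnn subr0 remaining_T.
have -> : chi T w *: z T w + \sum_(s < T) flow chi s T w - chi T w *: xi T w =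
    chi T w *: (z T w - xi T w - y1 T T.+1 w) + \sum_(s < T) (flow chi s T w - flow chi s T.+1 w).
  have sumE : \sum_(s < T) (flow chi s T w - flow chi s T.+1 w) = \sum_(s < T) flow chi s T w.
    by apply: eq_bigr => s _; rewrite flowT // subr0.
  by rewrite sumE (y1P (leqnn T)).2.1 subr0 scalerBr addrAC.
apply: KconeD; last by apply: Kcone_sum => s _; apply: Kcone_flow.
by apply: KconeZ; [case/andP: (hchi.2.1 T w) | apply: ((y1P (leqnn T)).2.2.1).2].
Qed.

Lemma Kcone_hedge_step t w : (t < T)%N ->
  Kcone pi t w (hedge chi t w - chi t w *: xi t w - hedge chi t.+1 w).
Proof.
move=> tT; have tT' := ltnW tT.
rewrite /hedge tT' tT remainingS big_ord_recr /=.
have -> (S1 S2 : vec) : remaining chi t w *: z t w + S1 - chi t w *: xi t w -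
    ((remaining chi t w - chi t w) *: z t.+1 w + (S2 + flow chi t t.+1 w)) =
    chi t w *: (z t w - xi t w - y1 t t.+1 w) +
    (remaining chi t w - chi t w) *: (z t w - z t.+1 w - y2 t t.+1 w) + (S1 - S2).
  by rewrite /flow; apply/rowP => i; rewrite !mxE; ring.
apply: KconeD; first apply: KconeD; try apply: KconeZ.
- by case/andP: (hchi.2.1 t w).
- exact: ((y1P tT').2.2.1).2.
- by rewrite -remainingS remaining_ge0 // ltnS ltnW.
- exact: ((y2P tT).2.2.1).2.
- by rewrite -sumrB; apply: Kcone_sum => s _; apply: Kcone_flow.
Qed.

Lemma hedge_inK t : (t <= T)%N ->
  inK t (fun w => hedge chi t w - chi t w *: xi t w - hedge chi t.+1 w).
Proof.
move=> tT; have [mh _] := hedge_strategy.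
split=> [|w].
  have mht : meas F t (hedge chi t).
    by apply: (meas_le hF (leq_pred t) tT); apply: (mh t); rewrite ltnW.
  exact (meas_map2 (fun a b => a - b)
    (meas_map2 (fun a b => a - b) mht (meas_map2 (fun c v => c *: v) (hchi.1 t tT) (hxi tT)))
    (mh t.+1 tT)).
by case: (ltngtP t T) tT => [tT _|//|-> _]; [apply: Kcone_hedge_step | apply: Kcone_hedge_last].
Qed.

End MixedStoppingTime.

Lemma hedge_nonanticipating chi chi' t w : (forall s, (s < t)%N -> chi s w = chi' s w) ->
  hedge chi t w = hedge chi' t w.
Proof.
move=> chiE; have remE u : (u <= t)%N -> remaining chi u w = remaining chi' u w.
  move=> ut; rewrite /remaining; congr (_ - _); apply: eq_bigr => s _.
  by apply: chiE; apply: leq_trans (ltn_ord s) ut.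
rewrite /hedge (remE t (leqnn t)); congr (if _ then _ + _ else _).
apply: eq_bigr => s _; rewrite /flow chiE // (remE s) // ltnW //.
Qed.

Lemma hedge_superhedging : PhiAg T F pi xi hedge /\ Yzero T F hedge x.
Proof.
split.
  split=> [chi hchi|chi chi' _ _ t w]; last exact: hedge_nonanticipating.
  by split; [apply: hedge_strategy | apply: hedge_inK].
by move=> chi _ w; rewrite /hedge /remaining big_ord0 big_ord0 subr0 scale1r addr0 z0.
Qed.

End HedgeConstruction.

Section CashPositions.
Variables (R : realType) (d : nat) (Omega : finType) (T : nat)
  (F : nat -> {set {set Omega}}) (pi : nat -> Omega -> 'I_d -> 'I_d -> R)
  (xi : nat -> Omega -> 'rV[R]_d).
Hypothesis hF : filtration T F.
Hypothesis hpi : exchange_rates T F pi.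
Hypothesis hxi : adapted_option T F xi.
Notation Zad := (Zad T F pi xi).
Notation Zad0 := (Zad0 T F pi xi).

Lemma Zad0_superhedging x : Zad0 x -> exists Y, PhiAg T F pi xi Y /\ Yzero T F Y x.
Proof.
move=> Zx; have [z [z0 zP zQ]] := Zad_chain hF Zx.
have y1ex t : exists y, (t <= T)%N -> deferral T F pi t (fun w => z t w - xi t w) y.
  case: (leqP t T) => [tT|_]; last by exists (fun _ _ => 0).
  have [mz Zz] := zP t tT.
  by have [_ [y yP]] := Zad_inQ_payoff hF hxi tT (meas_le hF (leq_pred t) tT mz) Zz; exists y.
have y2ex t : exists y, (t < T)%N -> deferral T F pi t (fun w => z t w - z t.+1 w) y.
  case: (ltnP t T) => [tT|_]; last by exists (fun _ _ => 0).
  by have [_ [y yP]] := zQ t tT; exists y.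
have [y1 y1P] := choice y1ex; have [y2 y2P] := choice y2ex.
have mz t : (t <= T)%N -> meas F t.-1 (z t) by move=> tT; case: (zP t tT).
by exists (hedge T z y1 y2); exact (hedge_superhedging hF hxi z0 mz y1P y2P).
Qed.

Definition payoff_bound (j : 'I_d) : R :=
  \sum_(t < T.+1) \sum_w \sum_k `|xi t w 0 k| * pi t w j k.

Lemma le_payoff_bound j t w : (t <= T)%N ->
  \sum_k `|xi t w 0 k| * pi t w j k <= payoff_bound j.
Proof.
have term_ge0 (t' : 'I_T.+1) w' k : 0 <= `|xi t' w' 0 k| * pi t' w' j k.
  by rewrite mulr_ge0 // ltW // (hpi (ltn_ord t')).2.1.
move=> tT; rewrite /payoff_bound (bigD1 (Ordinal (tT : (t < T.+1)%N))) //= (bigD1 w) //=.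
rewrite -addrA lerDl addr_ge0 //; apply: sumr_ge0 => *; apply: sumr_ge0 => *.
  exact: (term_ge0 (Ordinal (tT : (t < T.+1)%N))).
by apply: sumr_ge0 => *; apply: term_ge0.
Qed.

Lemma Zad_cash (j : 'I_d) (M : R) :
  (forall t w, (t <= T)%N -> \sum_k `|xi t w 0 k| * pi t w j k <= M) ->
  forall t w, (t <= T)%N -> Zad t w (M *: e j).
Proof.
move=> xiM t w tT.
have Uad_cash t' w' : (t' <= T)%N -> Uad T F pi xi t' w' (M *: e j).
  by move=> t'T; apply/UadE/Qnode_Kcone => //; apply/Kcone_dominated/xiM.
move: w; elim/backward_ind: t / tT => [|t tT IH] w; first by rewrite ZadT; apply: Uad_cash.
have tT' := ltnW tT; rewrite Zad_succ //; split; first exact: Uad_cash.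
exists (M *: e j); first by move=> w' _; apply: IH.
by exists 0; [apply: Qnode0 | rewrite addr0].
Qed.

Lemma Zad0_payoff_bound j : Zad0 (payoff_bound j *: e j).
Proof. by move=> w; apply: Zad_cash => // t w' tT; apply: le_payoff_bound. Qed.

Lemma Kcone_payoff_bound_add j t w : (t <= T)%N ->
  Kcone pi t w (payoff_bound j *: e j + xi t w).
Proof.
move=> tT; rewrite -[xi t w]opprK; apply: Kcone_dominated.
rewrite (eq_bigr (fun k => `|xi t w 0 k| * pi t w j k)) => [|k _]; last by rewrite mxE normrN.
exact: le_payoff_bound.
Qed.

Hypothesis hNA : no_arbitrage T F pi.

(* Shifting the superhedging strategy for exercise at T by - x e^j gives a strategy from 0
   whose terminal position dominates (- x - payoff_bound j) e^j, an arbitrage if that is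
   positive. *)
Lemma Zad0_cash_lower_bound j (x : R) : Zad0 (x *: e j) -> - payoff_bound j <= x.
Proof.
move=> Zx; rewrite leNgt; apply/negP => xlt.
set M := payoff_bound j; have pos : 0 < - x - M by rewrite subr_gt0 ltrNr.
have [Y [hY Yx]] := Zad0_superhedging Zx.
have hchi := mixed_stop_at R hF (stopping_cst F (leqnn T)).
set chi := stop_at R (fun=> T) in hchi.
have [[mY Y0] KY] := hY.1 chi hchi.
have chi_lt t w : (t < T)%N -> chi t w = 0 by rewrite /chi /stop_at => /gtn_eqF ->.
have chiT w : chi T w = 1 by rewrite /chi /stop_at eqxx.
apply: hNA; exists (fun t w => if (t <= T)%N then Y chi t w - x *: e j else 0); split.
  split=> [t tT|t w Tt]; last by rewrite leqNgt Tt.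
  case: leqP => _; last by [].
  exact (meas_map (fun v => v - x *: e j) (mY t tT)).
split; first by move=> w /=; rewrite (Yx _ hchi) subrr.
split.
  move=> t tT /=; rewrite tT (ltnW tT).
  by apply: eq_inK (KY t (ltnW tT)) => w; rewrite chi_lt // scale0r subr0 opprB addrA subrK.
exists (fun=> (- x - M) *: e j); split=> //; split.
  by move=> w k; rewrite !mxE; apply: mulr_ge0; [apply: ltW | case: (_ && _)].
split.
  case: (Omega_inhabited hF) => w; exists w; apply/eqP => /rowP /(_ j).
  by rewrite !mxE !eqxx mulr1 => xM0; move: pos; rewrite xM0 ltxx.
split.
  have mYT : meas F T (Y chi T) by apply: (meas_le hF (leq_pred T) (leqnn T)); apply: mY.
  apply: (eq_meas (x := fun w => Y chi T w - x *: e j - (- x - M) *: e j)).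
    by move=> w; rewrite /= leqnn.
  exact (meas_map (fun v => v - x *: e j - (- x - M) *: e j) mYT).
move=> w /=; rewrite leqnn.
have := (KY T (leqnn T)).2 w; rewrite chiT scale1r (Y0 T.+1) // subr0 => KYT.
suff -> : Y chi T w - x *: e j - (- x - M) *: e j = (Y chi T w - xi T w) + (M *: e j + xi T w).
  exact: KconeD KYT (Kcone_payoff_bound_add j w (leqnn T)).
by apply/rowP => i; rewrite !mxE; ring.
Qed.

End CashPositions.

Lemma inf_attained (R : realType) (S : set R) (y : R) :
  S y -> lbound S y -> inf S = y.
Proof.
move=> Sy lbSy; apply/eqP; rewrite eq_le lb_le_inf ?andbT //; last by exists y.
by apply: ge_inf => //; exists y.
Qed.

Unset Implicit Arguments.

Theorem theorem4p6 (R : realType) (d : nat) (Omega : finType) (T : nat)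
  (F : nat -> {set {set Omega}}) (pi : nat -> Omega -> 'I_d -> 'I_d -> R)
  (xi : nat -> Omega -> 'rV[R]_d)
  (hF : filtration T F) (hpi : exchange_rates T F pi)
  (hxi : adapted_option T F xi) (hNA : no_arbitrage T F pi) :
  Zad0 T F pi xi = [set x | exists Y, PhiAg T F pi xi Y /\ Yzero T F Y x] /\
  forall j : 'I_d,
    (Zad0 T F pi xi (askprice T F pi xi j *: e j) /\
     (forall x : R, Zad0 T F pi xi (x *: e j) -> askprice T F pi xi j <= x)) /\
    exists Y, PhiAg T F pi xi Y /\ Yzero T F Y (askprice T F pi xi j *: e j).
Proof.
have Zad0E : Zad0 T F pi xi = [set x | exists Y, PhiAg T F pi xi Y /\ Yzero T F Y x].
  apply/predeqP => v; split; first exact: (Zad0_superhedging hF hxi).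
  by case=> Y [hY Yv]; exact: (PhiAg_Zad0 hF hxi hY Yv).
split=> // j; set S := [set y : R | Zad0 T F pi xi (y *: e j)].
have [y Sy ymin] : exists2 y, S y & lbound S y.
  exact (polyhedral_line_min (S := S) (polyhedral_vec_line (e j) (polyhedral_vec_Zad0 xi hF hpi))
    (Zad0_payoff_bound xi hF hpi j) (Zad0_cash_lower_bound hF hpi hxi hNA (j := j))).
have askE : askprice T F pi xi j = y.
  rewrite /askprice.
  have -> : [set x : R | exists Y, PhiAg T F pi xi Y /\ Yzero T F Y (x *: e j)] = S.
    by rewrite /S Zad0E.
  exact: inf_attained.
by rewrite askE; split=> //; move: Sy; rewrite /S Zad0E.
Qed.
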